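(* Let $A\in\mathbb R^{n\times n}$ be tridiagonal, $n\ge2$, let $Q\in\mathbb R^{2n\times 2n}$ be the orthogonal matrix produced by Algorithm 1 (described in the context) applied to $A$, and set $Q_1=Q(1{:}n,1{:}n)$, $Q_2=Q(n{+}1{:}2n,1{:}n)$. Then for every $1\le k<n$, both $(Q_1Q_2^{T})(1{:}k,\,k{+}1{:}n)$ and $(Q_1Q_2^{T})(k{+}1{:}n,\,1{:}k)$ have rank at most $2$.
   Context: A Givens rotation on rows $p\ne q$ is an orthogonal matrix $G\in\mathbb R^{2n\times 2n}$ equal to the identity except in the entries $(p,p),(p,q),(q,p),(q,q)$, which form a $2\times2$ rotation $\begin{bmatrix}c&s\\-s&c\end{bmatrix}$, $c^2+s^2=1$. ''Rotate rows $p,q$ to annihilate $R(q,j)$'' means: choose such a $G$ for which $(G^{T}R)(q,j)=0$ and then update $R\leftarrow G^{T}R$, $Q\leftarrow QG$. Algorithm 1: Initialize $Q=I_{2n}$ and $R=\begin{bmatrix}A\\ I_n\end{bmatrix}\in\mathbb R^{2n\times n}$. First rotate rows $1,n+1$ to annihilate $R(n+1,1)$; then rotate rows $1,2$ to annihilate $R(2,1)$. Then for $i=2,\dots,n$: (a) rotate rows $n+1,n+i$ to annihilate $R(n+i,i)$; (b) rotate rows $i,n+1$ to annihilate $R(n+1,i)$; (c) if $i<n$, rotate rows $i,i+1$ to annihilate $R(i+1,i)$. On output $QR=\begin{bmatrix}A\\ I\end{bmatrix}$ with $R$ upper triangular. Notation $M(a{:}b,c{:}d)$ denotes the submatrix with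 rows $a,\dots,b$ and columns $c,\dots,d$. *)

(* Real numbers are modelled by an arbitrary real closed field. *)
From HB Require Import structures.
From mathcomp Require Import all_boot all_order all_algebra.
Set Implicit Arguments. Unset Strict Implicit. Unset Printing Implicit Defensive.
Import Order.TTheory GRing.Theory Num.Theory.
Local Open Scope ring_scope.

(* All row/column indices below are 0-based (paper index minus one). *)

Definition givens (R : ringType) (m p q : nat) (c s : R) : 'M[R]_m :=
  \matrix_(i < m, j < m)
    if (i == p :> nat) && (j == p :> nat) then c
    else if (i == p :> nat) && (j == q :> nat) then s
    else if (i == q :> nat) && (j == p :> nat) then - s
    else if (i == q :> nat) && (j == q :> nat) then c
    else (i == j)%:R.

(* The list of steps (p, q, j) of Algorithm 1 ("rotate rows p,q to annihilate
   R(q,j)"), 0-based, for an n x n matrix A. *)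
Definition alg1_steps (n : nat) : seq (nat * nat * nat) :=
  [:: (0, n, 0); (0, 1, 0)]%N ++
  flatten [seq [:: (n, n + i, i); (i, n, i)]%N ++
               (if (i < n.-1)%N then [:: (i, i.+1, i)] else [::])
          | i <- iota 1 n.-1].

Fixpoint alg1_run (R : rcfType) (n : nat) (steps : seq (nat * nat * nat))
    (Q : 'M[R]_(n + n)) (Rm : 'M[R]_(n + n, n))
    (Q' : 'M[R]_(n + n)) (Rm' : 'M[R]_(n + n, n)) : Prop :=
  match steps with
  | [::] => Q' = Q /\ Rm' = Rm
  | (p, q, jc) :: st =>
      exists c s : R, c ^+ 2 + s ^+ 2 = 1 /\
        let G := givens (n + n) p q c s in
        (forall (a : 'I_(n + n)) (b : 'I_n), (a : nat) = q -> (b : nat) = jc ->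
            (G^T *m Rm) a b = 0) /\
        alg1_run st (Q *m G) (G^T *m Rm) Q' Rm'
  end.

Definition alg1_output (R : rcfType) (n : nat) (A : 'M[R]_n) (Q : 'M[R]_(n + n)) : Prop :=
  exists Rm : 'M[R]_(n + n, n),
    alg1_run (alg1_steps n) 1%:M (col_mx A 1%:M) Q Rm.

Definition tridiagonal (R : ringType) (n : nat) (A : 'M[R]_n) : Prop :=
  forall i j : 'I_n, (i.+1 < j)%N \/ (j.+1 < i)%N -> A i j = 0.

Definition first_idx (n : nat) (k : 'I_n) (i : 'I_k) : 'I_n :=
  widen_ord (ltnW (ltn_ord k)) i.

Lemma last_idx_proof (n k : nat) (j : 'I_(n - k)) : (k + j < n)%N.
Proof. by have := ltn_ord j; rewrite ltn_subRL. Qed.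

Definition last_idx (n : nat) (k : 'I_n) (j : 'I_(n - k)) : 'I_n :=
  Ordinal (last_idx_proof j).

From HB Require Import structures.
From mathcomp Require Import all_boot all_order all_algebra zify ring.
Set Implicit Arguments. Unset Strict Implicit. Unset Printing Implicit Defensive.
Import Order.TTheory GRing.Theory Num.Theory.
Local Open Scope ring_scope.

(* Algorithm 1 produces an orthogonal Q with Q R = [A; I] and R upper triangular,
   i.e. Q1 R1 = A and Q2 R1 = I.  Hence Q1 = A Q2, and K = [I, -A; A^T, I] is
   invertible with inverse L = [I - Q1 Q1^T, Q1 Q2^T; -Q2 Q1^T, Q2 Q2^T], whose
   upper right block is Q1 Q2^T.  By the nullity theorem, for any splitting of the
   indices the off-diagonal block of L has rank at most that of the corresponding
   block of K, and for suitable splittings the latter has only two nonzero rows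
   because A is tridiagonal.  That R stays upper triangular is tracked through
   the rotations by an invariant on its zero pattern. *)

Section RankBounds.
Variable F : fieldType.

Lemma mxrank_mxsub m n m' n' (f : 'I_m' -> 'I_m) (g : 'I_n' -> 'I_n) (X : 'M[F]_(m, n)) :
  (\rank (mxsub f g X) <= \rank X)%N.
Proof.
rewrite -[X in mxsub _ _ X]mul1mx mxsub_mul.
apply: leq_trans (mxrankM_maxr _ _) _.
rewrite -[X in colsub _ X]mulmx1 -mulmx_colsub; exact: mxrankM_maxl.
Qed.

(* Right multiplication by D K D + E maps the left kernel of D K E injectively
   (its inverse being D L D + E) into the left kernel of D L E. *)
Lemma mxrank_offblock_inv_le N (K L D E : 'M[F]_N) :
  K *m L = 1%:M -> D + E = 1%:M -> D *m D = D -> E *m E = E ->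
  D *m E = 0 -> E *m D = 0 ->
  (\rank (D *m L *m E) <= \rank (D *m K *m E))%N.
Proof.
move=> KL DE DD EE DE0 ED0.
suff : (\rank (kermx (D *m K *m E)) <= \rank (kermx (D *m L *m E)))%N.
  by rewrite !mxrank_ker; have := rank_leq_row (D *m L *m E); lia.
have := mulmx_ker (D *m K *m E); rewrite !mulmxA.
move: (kermx (D *m K *m E)) => X kerX.
have KLr Y : Y *m K *m L = Y by rewrite -mulmxA KL mulmx1.
have DDr Y : Y *m D *m D = Y *m D by rewrite -mulmxA DD.
have EEr Y : Y *m E *m E = Y *m E by rewrite -mulmxA EE.
have DEr Y : Y *m D *m E = 0 by rewrite -mulmxA DE0 mulmx0.
have EDr Y : Y *m E *m D = 0 by rewrite -mulmxA ED0 mulmx0.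
have XDKD : X *m D *m K *m D = X *m D *m K.
  by rewrite -{2}[X *m D *m K]mulmx1 -DE mulmxDr kerX addr0.
have left_inv : X *m (D *m K *m D + E) *m (D *m L *m D + E) = X.
  rewrite !(mulmxDl, mulmxDr) !mulmxA !DDr XDKD KLr DDr kerX EDr !mul0mx EEr.
  by rewrite addr0 add0r -mulmxDr DE mulmx1.
have to_ker : X *m (D *m K *m D + E) *m (D *m L *m E) = 0.
  by rewrite !(mulmxDl, mulmxDr) !mulmxA !DDr XDKD KLr DEr EDr !mul0mx addr0.
rewrite -{1}left_inv; apply: leq_trans (mxrankM_maxl _ _) _.
by apply: mxrankS; apply/sub_kermxP.
Qed.

Lemma mxrank_two_rows m n (X : 'M[F]_(m, n)) (r1 r2 : 'I_m) :
  (forall i j, i != r1 -> i != r2 -> X i j = 0) -> (\rank X <= 2)%N.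
Proof.
move=> X0; have : (X <= row r1 X + row r2 X)%MS.
  apply/row_subP => i; case: (eqVneq i r1) => [->|ir1]; first exact: addsmxSl.
  case: (eqVneq i r2) => [->|ir2]; first exact: addsmxSr.
  suff -> : row i X = 0 by apply: sub0mx.
  by apply/rowP => j; rewrite !mxE X0.
move/mxrankS/leq_trans; apply; apply: leq_trans (mxrank_adds_leqif _ _) _.
by rewrite -(addn1 1); apply: leq_add; apply: rank_leq_row.
Qed.

Definition proj_mx N (P : pred 'I_N) : 'M[F]_N := diag_mx (\row_i (P i)%:R).

Lemma proj_mx_conjE N (P P' : pred 'I_N) (X : 'M[F]_N) a b :
  (proj_mx P *m X *m proj_mx P') a b = (P a)%:R * X a b * (P' b)%:R.
Proof. by rewrite mul_diag_mx mul_mx_diag !mxE. Qed.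

Lemma proj_mx_complP N (P : pred 'I_N) :
  let D := proj_mx P in let E := proj_mx (predC P) in
  [/\ D + E = 1%:M, D *m D = D, E *m E = E, D *m E = 0 & E *m D = 0].
Proof.
move=> D E; split; apply/matrixP => i j; rewrite ?mulmx_diag !mxE /=;
  by case: (P i); case: (i == j); rewrite ?(mulr1n, mulr0n, addr0, add0r, mul1r, mul0r).
Qed.

Lemma mxrank_ursubmx_inv_le2 n (K L : 'M[F]_(n + n)) (P : pred 'I_(n + n))
    (r1 r2 : 'I_(n + n)) m1 m2 (f : 'I_m1 -> 'I_n) (g : 'I_m2 -> 'I_n) :
  K *m L = 1%:M ->
  (forall a b, P a -> ~~ P b -> a != r1 -> a != r2 -> K a b = 0) ->
  (forall i, P (lshift n (f i))) -> (forall j, ~~ P (rshift n (g j))) ->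
  (\rank (mxsub f g (ursubmx L)) <= 2)%N.
Proof.
move=> KL K0 Pf Pg.
have -> : mxsub f g (ursubmx L) = mxsub (lshift n \o f) (@rshift n n \o g)
    (proj_mx P *m L *m proj_mx (predC P)).
  apply/matrixP => i j; rewrite [RHS]mxE proj_mx_conjE !mxE /= Pf (negbTE (Pg j)).
  by rewrite mul1r mulr1.
apply: leq_trans (mxrank_mxsub _ _ _) _.
have [DE DD EE DE0 ED0] := proj_mx_complP P.
apply: leq_trans (mxrank_offblock_inv_le KL DE DD EE DE0 ED0) _.
apply: (mxrank_two_rows (r1 := r1) (r2 := r2)) => a b ar1 ar2.
rewrite proj_mx_conjE /=; case Pa: (P a); last by rewrite !mul0r.
case Pb: (P b); first by rewrite mulr0.
by rewrite K0 ?Pb // mulr0 mul0r.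
Qed.

End RankBounds.

Lemma sum_delta_l (R : pzSemiRingType) N (f : 'I_N -> R) (i : 'I_N) :
  \sum_k (k == i)%:R * f k = f i.
Proof.
by rewrite (bigD1 i) //= eqxx mul1r big1 ?addr0 // => k /negbTE->; rewrite mul0r.
Qed.

Section Givens.
Variables (R : comNzRingType) (N p q : nat) (c s : R).
Local Notation G := (givens N p q c s).

Lemma givens_row_id (k a : 'I_N) : k != p :> nat -> k != q :> nat -> G k a = (k == a)%:R.
Proof. by move=> /negbTE kp /negbTE kq; rewrite mxE kp kq. Qed.

Lemma givens_col_id (k a : 'I_N) : a != p :> nat -> a != q :> nat -> G k a = (k == a)%:R.
Proof. by move=> /negbTE ap /negbTE aq; rewrite mxE ap aq !andbF. Qed.

Lemma trmx_givens_mul_id m (X : 'M[R]_(N, m)) (a : 'I_N) b :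
  a != p :> nat -> a != q :> nat -> (G^T *m X) a b = X a b.
Proof.
move=> ap aq; rewrite mxE; under eq_bigr do rewrite mxE givens_col_id //.
exact: sum_delta_l.
Qed.

Lemma trmx_givens_mul_eq0 m (X : 'M[R]_(N, m)) (a : 'I_N) b :
  (forall k : 'I_N, [|| k == a, k == p :> nat | k == q :> nat] -> X k b = 0) ->
  (G^T *m X) a b = 0.
Proof.
move=> X0; rewrite mxE big1 // => k _; rewrite mxE.
have [/X0->|] := boolP [|| k == a, k == p :> nat | k == q :> nat]; first by rewrite mulr0.
by rewrite !negb_or => /and3P[/negbTE ka kp kq]; rewrite givens_row_id // ka mul0r.
Qed.

Lemma givens_orthogonal : p != q -> (p < N)%N -> (q < N)%N -> c ^+ 2 + s ^+ 2 = 1 ->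
  G^T *m G = 1%:M.
Proof.
move=> pq ltpN ltqN cs; apply/matrixP => i j; rewrite !mxE.
under eq_bigr do rewrite mxE.
have [i_pq|] := boolP ((i == p :> nat) || (i == q :> nat)); last first.
  rewrite negb_or => /andP[ip iq].
  by under eq_bigr do rewrite givens_col_id //; rewrite sum_delta_l givens_row_id.
have [j_pq|] := boolP ((j == p :> nat) || (j == q :> nat)); last first.
  rewrite negb_or => /andP[jp jq].
  under eq_bigr do rewrite [G _ j]givens_col_id // mulrC.
  by rewrite sum_delta_l givens_row_id // eq_sym.
pose op := Ordinal ltpN; pose oq := Ordinal ltqN.
have opq : op != oq by [].
rewrite (bigD1 op) // (bigD1 oq) 1?eq_sym //= big1 ?addr0; last first.
  move=> k /andP[kp kq]; rewrite -!val_eqE /= in kp kq.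
  rewrite givens_row_id //; case: eqVneq => [ki|]; last by rewrite mul0r.
  by move: i_pq; rewrite -ki (negbTE kp) (negbTE kq).
have ord_pq (x : 'I_N) : (x == p :> nat) || (x == q :> nat) -> x = op \/ x = oq.
  by case/orP => /eqP xE; [left | right]; apply: val_inj.
have qp : q != p by rewrite eq_sym.
case: (ord_pq _ i_pq) => ->; case: (ord_pq _ j_pq) => ->;
  rewrite !mxE /= !eqxx (negbTE pq) (negbTE qp) /= ?(negbTE opq) 1?eq_sym ?(negbTE opq);
  by rewrite -?cs /=; ring.
Qed.
End Givens.

Definition qr_state (R : rcfType) n (A : 'M[R]_n) (Z : nat -> nat -> bool)
    (Q : 'M[R]_(n + n)) (Rm : 'M[R]_(n + n, n)) :=
  [/\ Q *m Rm = col_mx A 1%:M, Q^T *m Q = 1%:M &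
     forall (a : 'I_(n + n)) (b : 'I_n), Z a b -> Rm a b = 0].

(* If R vanishes on the pattern Z, then G^T R vanishes on Z', for any rotation G
   of rows p, q that annihilates (G^T R)(q, j). *)
Definition rotation_keeps_zeros n (p q j : nat) (Z Z' : nat -> nat -> bool) :=
  forall a b, (a < n + n)%N -> (b < n)%N -> Z' a b ->
    if (a == p) || (a == q) then ((a == q) && (b == j)) || (Z p b && Z q b)
    else Z a b.

Lemma qr_state_weaken (R : rcfType) n (A : 'M[R]_n) (Z Z' : nat -> nat -> bool) Q Rm :
  (forall a b, (a < n + n)%N -> (b < n)%N -> Z' a b -> Z a b) ->
  qr_state A Z Q Rm -> qr_state A Z' Q Rm.
Proof. by move=> ZZ' [QR QQ RZ]; split=> // a b /ZZ'/RZ; apply. Qed.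

Lemma alg1_run_cons (R : rcfType) n (A : 'M[R]_n) (Z Z' : nat -> nat -> bool)
    p q j st Q Rm Q' Rm' :
  p != q -> (p < n + n)%N -> (q < n + n)%N -> rotation_keeps_zeros n p q j Z Z' ->
  qr_state A Z Q Rm -> alg1_run ((p, q, j) :: st) Q Rm Q' Rm' ->
  exists Q1 R1, qr_state A Z' Q1 R1 /\ alg1_run st Q1 R1 Q' Rm'.
Proof.
move=> pq ltp ltq keepZ [QR QQ RZ] [c [s [cs [annih run]]]].
set G := givens (n + n) p q c s in annih run.
have GG : G^T *m G = 1%:M by apply: givens_orthogonal.
exists (Q *m G), (G^T *m Rm); split => //; split.
- by rewrite -mulmxA (mulmxA G) (mulmx1C GG) mul1mx.
- by rewrite trmx_mul -mulmxA (mulmxA Q^T) QQ mul1mx.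
move=> a b /(keepZ _ _ (ltn_ord a) (ltn_ord b)); case: ifP => [a_pq|].
  case/orP=> [/andP[/eqP aq /eqP bj] | /andP[Zp Zq]]; first exact: annih.
  apply: trmx_givens_mul_eq0 => k /or3P[/eqP->|/eqP kp|/eqP kq]; apply: RZ;
    rewrite ?kp ?kq //.
  by case/orP: a_pq => /eqP->.
by move/negbT; rewrite negb_or => /andP[ap aq] /RZ; rewrite trmx_givens_mul_id.
Qed.

Section ZeroPatterns.
Local Open Scope nat_scope.
Variable n : nat.

(* Zeros of R when column i (0-based) is about to be processed (for i = 0,
   those of [A; I]): rows i+1..n-1
   are still rows of the tridiagonal A, row i only has entries in columns i, i+1,
   row n carries a single fill-in in column i, rows n+1..n+i-1 vanish and rows
   n+i.. are still rows of the identity. *)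
Definition col_zeros i a b :=
  [|| (a == i) && (b != i) && (b != i.+1), (a == n) && (b != i),
      (n + i <= a) && (a != n + b), n < a < n + i
    | (i < a < n) && ((b.+1 < a) || (a.+1 < b))].

Definition first_zeros a b := ((a == n) && (b != 1)) || ((a != n) && col_zeros 0 a b).

Definition col_zeros_a i a b := col_zeros i a b || (a == n + i).

Definition col_zeros_b i a b :=
  [|| (a == i) && (b != i) && (b != i.+1), (a == n) && (b != i.+1),
      (n + i <= a) && (a != n + b), n < a <= n + i
    | (i < a < n) && ((b.+1 < a) || (a.+1 < b))].

Local Ltac zeros_lia :=
  move=> ? a b ? ?; rewrite /first_zeros /col_zeros_a /col_zeros_b /col_zeros; case: ifP; lia.

Lemma first_zeros_kept : 2 <= n -> rotation_keeps_zeros n 0 n 0 (col_zeros 0) first_zeros.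
Proof. zeros_lia. Qed.

Lemma col_zeros1_kept : 2 <= n -> rotation_keeps_zeros n 0 1 0 first_zeros (col_zeros 1).
Proof. zeros_lia. Qed.

Lemma col_zeros_a_kept i :
  1 <= i < n -> rotation_keeps_zeros n n (n + i) i (col_zeros i) (col_zeros_a i).
Proof. zeros_lia. Qed.

Lemma col_zeros_b_kept i :
  1 <= i < n -> rotation_keeps_zeros n i n i (col_zeros_a i) (col_zeros_b i).
Proof. zeros_lia. Qed.

Lemma col_zeros_S_kept i :
  1 <= i < n.-1 -> rotation_keeps_zeros n i i.+1 i (col_zeros_b i) (col_zeros i.+1).
Proof. zeros_lia. Qed.

Lemma col_zeros_b_last a b : 1 <= n -> col_zeros n a b -> col_zeros_b n.-1 a b.
Proof. rewrite /col_zeros /col_zeros_b; lia. Qed.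

End ZeroPatterns.

Definition col_steps n i : seq (nat * nat * nat) :=
  [:: (n, n + i, i); (i, n, i)]%N ++ (if (i < n.-1)%N then [:: (i, i.+1, i)] else [::]).

Lemma alg1_stepsE n :
  alg1_steps n = (0, n, 0)%N :: (0, 1, 0)%N :: flatten [seq col_steps n i | i <- iota 1 n.-1].
Proof. by []. Qed.

Section Run.
Variables (R : rcfType) (n : nat) (A : 'M[R]_n) (Q' : 'M[R]_(n + n)) (R' : 'M[R]_(n + n, n)).

Lemma alg1_run_col i st Q Rm :
  (1 <= i < n)%N -> qr_state A (col_zeros n i) Q Rm ->
  alg1_run (col_steps n i ++ st) Q Rm Q' R' ->
  exists Q1 R1, qr_state A (col_zeros n i.+1) Q1 R1 /\ alg1_run st Q1 R1 Q' R'.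
Proof.
move=> lt1in S run.
have [||| Q1 [R1 [S1 run1]]] := alg1_run_cons _ _ _ (col_zeros_a_kept lt1in) S run; try lia.
have [||| Q2 [R2 [S2 run2]]] := alg1_run_cons _ _ _ (col_zeros_b_kept lt1in) S1 run1; try lia.
move: run2; case: ifP => lti; rewrite ?cat1s ?cat0s => run2.
  have lt1i : (1 <= i < n.-1)%N by lia.
  have [||| Q3 [R3 [S3 run3]]] := alg1_run_cons _ _ _ (col_zeros_S_kept lt1i) S2 run2; try lia.
  by exists Q3, R3.
have ei : i = n.-1 by move/negbT: lti; lia.
exists Q2, R2; rewrite (_ : i.+1 = n); last by lia.
split=> //; apply: qr_state_weaken S2 => a b _ _; rewrite ei.
by apply: col_zeros_b_last; lia.
Qed.

Lemma alg1_run_cols m i Q Rm :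
  (1 <= i)%N -> (i + m = n)%N -> qr_state A (col_zeros n i) Q Rm ->
  alg1_run (flatten [seq col_steps n j | j <- iota i m]) Q Rm Q' R' ->
  qr_state A (col_zeros n n) Q' R'.
Proof.
elim: m i Q Rm => [|m IH] i Q Rm le1i eq_n S run.
  by move: run S => [-> ->]; rewrite addn0 in eq_n; subst i.
have [|Q1 [R1 [S1 run1]]] := alg1_run_col _ S run; first by lia.
by apply: IH S1 run1; lia.
Qed.

End Run.

Lemma qr_state_init (R : rcfType) n (A : 'M[R]_n) :
  tridiagonal A -> qr_state A (col_zeros n 0) 1%:M (col_mx A 1%:M).
Proof.
move=> triA; split; [exact: mul1mx | by rewrite trmx1 mulmx1 |].
move=> a b; rewrite mxE; case: splitP => [i|i] ->; rewrite /col_zeros.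
  by move=> Zib; apply: triA; move: Zib (ltn_ord i); lia.
move=> Zib; rewrite mxE (_ : i == b = false) //; apply/negP => /eqP ib.
by move: Zib; rewrite ib; lia.
Qed.

Lemma alg1_output_state (R : rcfType) n (A : 'M[R]_n) Q :
  (2 <= n)%N -> tridiagonal A -> alg1_output A Q ->
  exists Rm, qr_state A (col_zeros n n) Q Rm.
Proof.
move=> le2n triA [Rm run]; exists Rm; rewrite alg1_stepsE in run.
have [||| Q1 [R1 [S1 run1]]] :=
  alg1_run_cons _ _ _ (first_zeros_kept le2n) (qr_state_init triA) run; try lia.
have [||| Q2 [R2 [S2 run2]]] := alg1_run_cons _ _ _ (col_zeros1_kept le2n) S1 run1; try lia.
by apply: alg1_run_cols S2 run2; lia.
Qed.

Lemma qr_block_inverse (R : comUnitRingType) n (A Q1 Q2 R1 : 'M[R]_n) :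
  Q1 *m R1 = A -> Q2 *m R1 = 1%:M -> Q1^T *m Q1 + Q2^T *m Q2 = 1%:M ->
  block_mx 1%:M (- A) A^T 1%:M *m
    block_mx (1%:M - Q1 *m Q1^T) (Q1 *m Q2^T) (- (Q2 *m Q1^T)) (Q2 *m Q2^T) = 1%:M.
Proof.
move=> QR1 Q2R1 QQ.
have AQ2 : A *m Q2 = Q1 by rewrite -QR1 -mulmxA (mulmx1C Q2R1) mulmx1.
have AtQ1 : A^T *m Q1 = R1^T - Q2.
  rewrite -QR1 trmx_mul -mulmxA -[Q1^T *m Q1](addrK (Q2^T *m Q2)) QQ.
  by rewrite mulmxBr mulmx1 mulmxA -trmx_mul Q2R1 trmx1 mul1mx.
rewrite mulmx_block [RHS](scalar_mx_block n n); congr block_mx.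
- by rewrite mul1mx mulNmx mulmxN opprK mulmxA AQ2 subrK.
- by rewrite mul1mx mulNmx mulmxA AQ2 subrr.
- rewrite mul1mx mulmxBr mulmx1 mulmxA AtQ1 mulmxBl -{1}QR1 trmx_mul.
  by rewrite opprB addrCA subrr addr0 subrr.
- by rewrite mulmxA AtQ1 mulmxBl mul1mx subrK -trmx_mul Q2R1 trmx1.
Qed.

Lemma alg1_output_qr (R : rcfType) n (A : 'M[R]_n) Q :
  (2 <= n)%N -> tridiagonal A -> alg1_output A Q ->
  exists R1 : 'M[R]_n, [/\ ulsubmx Q *m R1 = A, dlsubmx Q *m R1 = 1%:M &
    (ulsubmx Q)^T *m ulsubmx Q + (dlsubmx Q)^T *m dlsubmx Q = 1%:M].
Proof.
move=> le2n triA out; have [Rm [QR QQ RZ]] := alg1_output_state le2n triA out.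
have Rd0 : dsubmx Rm = 0.
  apply/matrixP => i j; rewrite !mxE; apply: RZ; rewrite /col_zeros /=.
  by have := ltn_ord i; have := ltn_ord j; lia.
have [QR1 Q2R1] : ulsubmx Q *m usubmx Rm = A /\ dlsubmx Q *m usubmx Rm = 1%:M.
  move: QR; rewrite -[Q]submxK -[Rm]vsubmxK Rd0 mul_block_col !mulmx0 !addr0.
  by rewrite !block_mxKul !block_mxKdl col_mxKu => /eq_col_mx.
exists (usubmx Rm); split=> //.
move: QQ; rewrite -{1 2}[Q]submxK tr_block_mx mulmx_block [1%:M](scalar_mx_block n n).
by case/eq_block_mx.
Qed.

Lemma tri_block_eq0 (R : ringType) n (A : 'M[R]_n) (a b : 'I_(n + n)) :
  tridiagonal A -> a != b ->
  ((a < n <= b)%N -> (a + n).+1 < b \/ b.+1 < a + n)%N ->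
  ((b < n <= a)%N -> (b + n).+1 < a \/ a.+1 < b + n)%N ->
  block_mx 1%:M (- A) A^T 1%:M a b = 0.
Proof.
move=> triA ab far_ab far_ba; rewrite -[a]splitK -[b]splitK in ab far_ab far_ba *.
case: (split a) ab far_ab far_ba => i; case: (split b) => j /=;
  rewrite ?block_mxEul ?block_mxEur ?block_mxEdl ?block_mxEdr !mxE;
  have := ltn_ord i; have := ltn_ord j.
- by rewrite (inj_eq (@lshift_inj _ _)) => _ _ /negbTE->.
- by move=> ltj lti _ far _; rewrite triA ?oppr0 //; lia.
- by move=> ltj lti _ _ far; rewrite triA //; lia.
- by rewrite (inj_eq (@rshift_inj _ _)) => _ _ /negbTE->.
Qed.

(* With K and L as in qr_block_inverse, M(1:k, k+1:n) and M(k+1:n, 1:k) are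
   submatrices of the (cut, complement) blocks of L for the two cuts below, and
   the corresponding blocks of K are supported on rows k-1 and k (0-based). *)
Definition lead_cut n k : pred 'I_(n + n) :=
  fun a => (((a < n) && (a <= k)) || ((n <= a) && (a < n + k)))%N.

Definition trail_cut n k : pred 'I_(n + n) :=
  fun a => (((a < n) && (k.-1 <= a)) || (n + k <= a))%N.

Section Cuts.
Variables (R : ringType) (n k : nat) (A : 'M[R]_n).
Hypothesis triA : tridiagonal A.

Lemma lead_cut_support (a b : 'I_(n + n)) :
  lead_cut k a -> ~~ lead_cut k b -> a != k.-1 :> nat -> a != k :> nat ->
  block_mx 1%:M (- A) A^T 1%:M a b = 0.
Proof.
move=> Pa Pb ak1 ak; apply: tri_block_eq0 => //; first by apply: contraNneq Pb => <-.
all: by move: Pa Pb ak1 ak; rewrite /lead_cut; lia.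
Qed.

Lemma trail_cut_support (a b : 'I_(n + n)) :
  trail_cut k a -> ~~ trail_cut k b -> a != k.-1 :> nat -> a != k :> nat ->
  block_mx 1%:M (- A) A^T 1%:M a b = 0.
Proof.
move=> Pa Pb ak1 ak; apply: tri_block_eq0 => //; first by apply: contraNneq Pb => <-.
all: by move: Pa Pb ak1 ak; rewrite /trail_cut; lia.
Qed.

End Cuts.

Theorem theorem4p2 (R : rcfType) (n : nat) (A : 'M[R]_n) (Q : 'M[R]_(n + n)) :
  (2 <= n)%N -> tridiagonal A -> alg1_output A Q ->
  let M := ulsubmx Q *m (dlsubmx Q)^T in
  forall k : 'I_n, (1 <= k)%N ->
    (\rank (mxsub (@first_idx n k) (@last_idx n k) M) <= 2)%N /\
    (\rank (mxsub (@last_idx n k) (@first_idx n k) M) <= 2)%N.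
Proof.
move=> le2n triA out M k _.
have [R1 [QR1 Q2R1 QQ]] := alg1_output_qr le2n triA out.
have KL := qr_block_inverse QR1 Q2R1 QQ; set L := block_mx (1%:M - _) _ _ _ in KL.
have -> : M = ursubmx L by rewrite block_mxKur.
have ltk := ltn_ord k; have lt_k1 : (k.-1 < n + n)%N by lia.
have lt_k : (k < n + n)%N by lia.
have rank_le2 P :=
  mxrank_ursubmx_inv_le2 (P := P) (r1 := Ordinal lt_k1) (r2 := Ordinal lt_k) KL.
split; [apply: (rank_le2 _ _ _ _ (lead_cut k)) | apply: (rank_le2 _ _ _ _ (trail_cut k))].
- by move=> a b Pa Pb; rewrite -!val_eqE; apply: lead_cut_support.
- by move=> i; rewrite /lead_cut /=; have := ltn_ord i; lia.
- by move=> j; rewrite /lead_cut /=; have := ltn_ord j; lia.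
- by move=> a b Pa Pb; rewrite -!val_eqE; apply: trail_cut_support.
- by move=> i; rewrite /trail_cut /=; have := ltn_ord i; lia.
- by move=> j; rewrite /trail_cut /=; have := ltn_ord j; lia.
Qed.
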